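(* Let $\pi_2$ be the five-dimensional complex associative algebra with basis $e_1,\dots,e_5$ and nonzero products $e_1e_1=e_2$, $e_1e_2=e_2e_1=e_3$, $e_1e_4=e_4e_1=e_5$, $e_4e_4=e_5$ (all other products of basis elements are zero). The vector space $LocDer(\pi_2)$ of all local derivations of $\pi_2$ is a Lie algebra with respect to the bracket $[\nabla,\Delta]=\nabla\Delta-\Delta\nabla$; that is, $[\nabla,\Delta]\in LocDer(\pi_2)$ for all $\nabla,\Delta\in LocDer(\pi_2)$.
   Context: A derivation of an algebra $A$ is a linear map $D$ with $D(xy)=D(x)y+xD(y)$ for all $x,y\in A$. A linear map $\nabla:A\to A$ is a local derivation if for every $x\in A$ there is a derivation $D_x$ of $A$ (depending on $x$) with $\nabla(x)=D_x(x)$. *)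

(* The complex field is modelled as (complex R) = R[i] from
   mathcomp-real-closed, with R = Stdlib's real numbers (a realType, hence an
   rcfType, via Rstruct). *)
From HB Require Import structures.
From mathcomp Require Import all_boot all_order all_algebra.
From mathcomp Require Import complex.
From mathcomp Require Import Rstruct.
Set Implicit Arguments. Unset Strict Implicit. Unset Printing Implicit Defensive.
Import Order.TTheory GRing.Theory Num.Theory.
Local Open Scope ring_scope.

Definition CC : fieldType := complex Rdefinitions.R.

(* The i-th standard basis vector of F^5 (0-indexed: e_{k+1} of the paper is
   basis_vec k). *)
Definition basis_vec (F : nzRingType) (k : nat) : 'rV[F]_5 :=
  \row_(l < 5) (nat_of_ord l == k)%:R.

Definition pi2_tab (F : nzRingType) (i j : 'I_5) : 'rV[F]_5 :=
  match nat_of_ord i, nat_of_ord j with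
  | 0, 0 => basis_vec F 1
  | 0, 1 | 1, 0 => basis_vec F 2
  | 0, 3 | 3, 0 => basis_vec F 4
  | 3, 3 => basis_vec F 4
  | _, _ => 0
  end.

Definition pi2_mul (F : nzRingType) (x y : 'rV[F]_5) : 'rV[F]_5 :=
  \sum_(i < 5) \sum_(j < 5) (x 0 i * y 0 j) *: pi2_tab F i j.

Definition is_linear_map (F : nzRingType) (f : 'rV[F]_5 -> 'rV[F]_5) : Prop :=
  forall (a : F) (x y : 'rV[F]_5), f (a *: x + y) = a *: f x + f y.

Definition is_derivation (F : nzRingType) (D : 'rV[F]_5 -> 'rV[F]_5) : Prop :=
  is_linear_map D /\
  forall x y, D (pi2_mul x y) = pi2_mul (D x) y + pi2_mul x (D y).

Definition is_local_derivation (F : nzRingType) (N : 'rV[F]_5 -> 'rV[F]_5) : Prop :=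
  is_linear_map N /\
  forall x, exists D, is_derivation D /\ N x = D x.

Definition bracket (F : nzRingType) (N M : 'rV[F]_5 -> 'rV[F]_5) : 'rV[F]_5 -> 'rV[F]_5 :=
  fun x => N (M x) - M (N x).

From mathcomp Require Import all_boot all_order all_algebra.
From mathcomp Require Import complex.
From mathcomp Require Import Rstruct.
From mathcomp Require Import ring.
Set Implicit Arguments. Unset Strict Implicit. Unset Printing Implicit Defensive.
Import GRing.Theory Num.Theory.
Local Open Scope ring_scope.

(* In coordinates (1-based here; the ordinals [i0..i4] are 0-based) a
   derivation of pi_2 is x |-> x *m D with D of the shape [der_mx]: its first
   row, the image of e_1, is arbitrary, the images of e_2, e_3, e_5 are forced
   by it, and the image of e_4 has two more free coordinates.  Testing a local
   derivation at e_2, ..., e_5, e_1 - e_4 and e_2 - e_5 shows that its matrix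
   A has the zero pattern of [locder_mx] together with A_44 = A_11 + A_14 and
   A_55 = A_22 + A_25.  Conversely, when 2 and 3 are invertible, such an A
   agrees at every x with some derivation, found by solving for it along the
   first nonzero coordinate among x_1, x_4, x_2.  Finally these matrices are
   closed under commutators by direct computation. *)

Local Notation i0 := (@Ordinal 5 0 isT).
Local Notation i1 := (@Ordinal 5 1 isT).
Local Notation i2 := (@Ordinal 5 2 isT).
Local Notation i3 := (@Ordinal 5 3 isT).
Local Notation i4 := (@Ordinal 5 4 isT).

Lemma ord5_ind (P : 'I_5 -> Prop) : P i0 -> P i1 -> P i2 -> P i3 -> P i4 -> forall i, P i.
Proof.
by move=> ? ? ? ? ? [[|[|[|[|[|k]]]]] hk] //; rewrite (bool_irrelevance hk isT).
Qed.

Lemma big_ord5 (V : nmodType) (f : 'I_5 -> V) :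
  \sum_(i < 5) f i = f i0 + f i1 + f i2 + f i3 + f i4.
Proof.
rewrite !big_ord_recl big_ord0 addr0 !addrA.
by congr (f _ + f _ + f _ + f _ + f _); apply: val_inj.
Qed.

Section LinearMap.
Variables (F : nzRingType) (f : 'rV[F]_5 -> 'rV[F]_5).
Hypothesis f_lin : is_linear_map f.

Lemma linear_map0 : f 0 = 0.
Proof.
have := f_lin 1 0 0; rewrite !scale1r addr0 => f0.
by apply: (addrI (f 0)); rewrite -f0 addr0.
Qed.

Lemma linear_mapD u v : f (u + v) = f u + f v.
Proof. by have := f_lin 1 u v; rewrite !scale1r. Qed.

Lemma linear_mapZ a u : f (a *: u) = a *: f u.
Proof. by have := f_lin a u 0; rewrite !addr0 linear_map0 addr0. Qed.

Lemma mul_rV_lin1_map u : f u = u *m lin1_mx f.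
Proof.
rewrite [u in LHS]row_sum_delta (big_morph f linear_mapD linear_map0).
apply/rowP=> j; rewrite !mxE summxE; apply: eq_bigr => i _.
by rewrite linear_mapZ !mxE.
Qed.

End LinearMap.

Lemma eq_local_derivation (F : nzRingType) (f g : 'rV[F]_5 -> 'rV[F]_5) :
  f =1 g -> is_local_derivation f -> is_local_derivation g.
Proof.
move=> fg [f_lin f_loc]; split=> [a x y|x]; first by rewrite -!fg f_lin.
by have [D [? fD]] := f_loc x; exists D; rewrite -fg.
Qed.

Section Pi2.
Variable F : comNzRingType.
Implicit Types (x y : 'rV[F]_5) (A B : 'M[F]_5).

Definition row5 (a b c d e : F) : 'rV[F]_5 := \row_j [:: a; b; c; d; e]`_j.

Lemma pi2_mulE x y : pi2_mul x y =
  row5 0 (x 0 i0 * y 0 i0) (x 0 i0 * y 0 i1 + x 0 i1 * y 0 i0) 0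
       (x 0 i0 * y 0 i3 + x 0 i3 * y 0 i0 + x 0 i3 * y 0 i3).
Proof.
apply/rowP; apply: ord5_ind; rewrite /pi2_mul summxE big_ord5 !summxE !big_ord5 !mxE /=.
all: ring.
Qed.

Definition der_mx (a : 'rV[F]_5) (b c : F) : 'M[F]_5 :=
  \matrix_(i < 5) [:: a;
                      row5 0 (2 * a 0 i0) (2 * a 0 i1) 0 (2 * a 0 i3);
                      row5 0 0 (3 * a 0 i0) 0 0;
                      row5 0 0 b (a 0 i0 + a 0 i3) c;
                      row5 0 0 0 0 (2 * (a 0 i0 + a 0 i3))]`_i.

Lemma der_mx_mul x a b c : x *m der_mx a b c =
  row5 (x 0 i0 * a 0 i0)
       (x 0 i0 * a 0 i1 + 2 * x 0 i1 * a 0 i0)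
       (x 0 i0 * a 0 i2 + 2 * x 0 i1 * a 0 i1 + 3 * x 0 i2 * a 0 i0 + x 0 i3 * b)
       (x 0 i0 * a 0 i3 + x 0 i3 * (a 0 i0 + a 0 i3))
       (x 0 i0 * a 0 i4 + 2 * x 0 i1 * a 0 i3 + x 0 i3 * c
          + 2 * x 0 i4 * (a 0 i0 + a 0 i3)).
Proof. by apply/rowP; apply: ord5_ind; rewrite !mxE big_ord5 !mxE /=; ring. Qed.

Lemma der_mx_derivation a b c : is_derivation (mulmx^~ (der_mx a b c)).
Proof.
split=> [k x y|x y]; first by rewrite mulmxDl scalemxAl.
by rewrite !der_mx_mul !pi2_mulE; apply/rowP; apply: ord5_ind; rewrite !mxE /=; ring.
Qed.

Lemma derivation_der_mx D : is_derivation D ->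
  exists a b c, forall x, D x = x *m der_mx a b c.
Proof.
case=> D_lin D_leib; move: (lin1_mx D) (mul_rV_lin1_map D_lin) => A DA.
have leib i j k : pi2_mul 'e_i 'e_j = 'e_k :> 'rV[F]_5 ->
    row k A = pi2_mul (row i A) 'e_j + pi2_mul 'e_i (row j A).
  by move=> ijk; have := D_leib 'e_i 'e_j; rewrite !DA ijk -!rowE.
have [/leib r1 /leib r2 /leib r4 /leib r4'] :
    [/\ pi2_mul 'e_i0 'e_i0 = 'e_i1 :> 'rV[F]_5,
        pi2_mul 'e_i0 'e_i1 = 'e_i2 :> 'rV[F]_5,
        pi2_mul 'e_i0 'e_i3 = 'e_i4 :> 'rV[F]_5
      & pi2_mul 'e_i3 'e_i3 = 'e_i4 :> 'rV[F]_5].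
  by split; rewrite pi2_mulE; apply/rowP; apply: ord5_ind; rewrite !mxE /=; ring.
(* e_1 e_4 = e_4 e_4 = e_5 pins down the image of e_4. *)
have /rowP r44 := etrans (esym r4) r4'.
have [A30 A31 A33] : [/\ A i3 i0 = 0, A i3 i1 = 0 & A i3 i3 = A i0 i0 + A i0 i3].
  move: (r44 i1) (r44 i2) (r44 i4); rewrite !pi2_mulE !mxE /=.
  rewrite !(mulr0, mul0r, mul1r, mulr1, addr0, add0r) => -> ->.
  by rewrite !add0r => /addIr ->.
exists (row i0 A), (A i3 i2), (A i3 i4) => x; rewrite DA; congr (x *m _).
apply/row_matrixP; apply: ord5_ind; rewrite rowK //=; apply/rowP; apply: ord5_ind.
all: by rewrite ?r2 ?r1 ?r4 ?pi2_mulE !mxE /= ?A30 ?A31 ?A33; ring.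
Qed.

Definition locder_mx A : Prop :=
  [/\ A i1 i0 = 0 /\ A i1 i3 = 0,
      [/\ A i2 i0 = 0, A i2 i1 = 0, A i2 i3 = 0 & A i2 i4 = 0],
      [/\ A i3 i0 = 0, A i3 i1 = 0 & A i3 i3 = A i0 i0 + A i0 i3],
      [/\ A i4 i0 = 0, A i4 i1 = 0, A i4 i2 = 0 & A i4 i3 = 0]
    & A i4 i4 = A i1 i1 + A i1 i4].

Lemma locder_mxE A : locder_mx A ->
  (A i1 i0 = 0) * (A i1 i3 = 0)
  * (A i2 i0 = 0) * (A i2 i1 = 0) * (A i2 i3 = 0) * (A i2 i4 = 0)
  * (A i3 i0 = 0) * (A i3 i1 = 0) * (A i3 i3 = A i0 i0 + A i0 i3)
  * (A i4 i0 = 0) * (A i4 i1 = 0) * (A i4 i2 = 0) * (A i4 i3 = 0)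
  * (A i4 i4 = A i1 i1 + A i1 i4).
Proof. by case=> [[? ?] [? ? ? ?] [? ? ?] [? ? ? ?] ?]. Qed.

Lemma locder_mx_mul A x : locder_mx A -> x *m A =
  row5 (x 0 i0 * A i0 i0)
       (x 0 i0 * A i0 i1 + x 0 i1 * A i1 i1)
       (x 0 i0 * A i0 i2 + x 0 i1 * A i1 i2 + x 0 i2 * A i2 i2 + x 0 i3 * A i3 i2)
       (x 0 i0 * A i0 i3 + x 0 i3 * (A i0 i0 + A i0 i3))
       (x 0 i0 * A i0 i4 + x 0 i1 * A i1 i4 + x 0 i3 * A i3 i4
          + x 0 i4 * (A i1 i1 + A i1 i4)).
Proof.
move=> /locder_mxE hA; apply/rowP; apply: ord5_ind; rewrite !mxE big_ord5 /= ?hA; ring.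
Qed.

Lemma local_derivation_locder_mx N : is_local_derivation N -> locder_mx (lin1_mx N).
Proof.
case=> N_lin N_loc; move: (lin1_mx N) (mul_rV_lin1_map N_lin) => A NA.
have der_at x : exists a b c, x *m A = x *m der_mx a b c.
  have [D [/derivation_der_mx [a [b [c Da]]] ND]] := N_loc x.
  by exists a, b, c; rewrite -NA ND Da.
have row_der i : exists a b c, forall j, A i j = der_mx a b c i j.
  have [a [b [c /rowP aA]]] := der_at 'e_i.
  by exists a, b, c => j; move: (aA j); rewrite -!rowE !mxE.
have [? [? [? R1]]] := row_der i1; have [? [? [? R2]]] := row_der i2.
have [? [? [? R3]]] := row_der i3; have [? [? [? R4]]] := row_der i4.
(* The two diagonal relations only appear when testing at e_1 - e_4 and e_2 - e_5. *)
have [a [b [c /rowP R03]]] := der_at ('e_i0 - 'e_i3).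
have [a' [b' [c' /rowP R14]]] := der_at ('e_i1 - 'e_i4).
rewrite !mulmxBl -!rowE in R03 R14.
have [A30 A41] : A i3 i0 = 0 /\ A i4 i1 = 0 by rewrite R3 R4 !mxE.
split; try by split; rewrite ?(R1, R2, R3, R4) !mxE.
- split; [by [] | by rewrite R3 !mxE |].
  move: (R03 i0) (R03 i3); rewrite !mxE /= A30 !subr0 => -> h.
  by rewrite -(subKr (A i0 i3) (A i3 i3)) h; ring.
- move: (R14 i1) (R14 i4); rewrite !mxE /= A41 !subr0 => -> h.
  by rewrite -(subKr (A i1 i4) (A i4 i4)) h; ring.
Qed.

Lemma locder_mx_commutator A B :
  locder_mx A -> locder_mx B -> locder_mx (A *m B - B *m A).
Proof.
move=> /locder_mxE hA /locder_mxE hB.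
split; try split; rewrite !mxE !big_ord5 ?hA ?hB; ring.
Qed.

End Pi2.

Section LocalDerivationsOverFields.
Variable F : fieldType.
Hypotheses (two_neq0 : 2 != 0 :> F) (three_neq0 : 3 != 0 :> F).

Lemma locder_mx_local_derivation (A : 'M[F]_5) :
  locder_mx A -> is_local_derivation (mulmx^~ A).
Proof.
move=> hA; split=> [k x y|x]; first by rewrite mulmxDl scalemxAl.
suff [a [b [c xA]]] : exists a b c, x *m A = x *m der_mx a b c.
  by exists (mulmx^~ (der_mx a b c)); split; first exact: der_mx_derivation.
set y := x *m A.
have [x0|x0] := eqVneq (x 0 i0) 0; last first.
  pose a1 := (y 0 i1 - 2 * x 0 i1 * A i0 i0) / x 0 i0.
  pose a2 := (y 0 i2 - 2 * x 0 i1 * a1 - 3 * x 0 i2 * A i0 i0) / x 0 i0.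
  pose a4 :=
    (y 0 i4 - 2 * x 0 i1 * A i0 i3 - 2 * x 0 i4 * (A i0 i0 + A i0 i3)) / x 0 i0.
  exists (row5 (A i0 i0) a1 a2 (A i0 i3) a4), 0, 0.
  rewrite der_mx_mul /a2 /a1 /a4 /y locder_mx_mul // !mxE /=.
  by congr row5; field.
have [x3|x3] := eqVneq (x 0 i3) 0; last first.
  pose a0 := A i1 i1 / 2; pose a3 := A i0 i0 + A i0 i3 - a0.
  exists (row5 a0 0 0 a3 0), ((y 0 i2 - 3 * x 0 i2 * a0) / x 0 i3),
    ((y 0 i4 - 2 * x 0 i1 * a3 - 2 * x 0 i4 * (a0 + a3)) / x 0 i3).
  rewrite der_mx_mul /a3 /a0 /y locder_mx_mul // !mxE /= x0.
  by congr row5; field; rewrite ?x3 ?two_neq0.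
have [x1|x1] := eqVneq (x 0 i1) 0; last first.
  pose a0 := A i1 i1 / 2.
  exists (row5 a0 ((y 0 i2 - 3 * x 0 i2 * a0) / (2 * x 0 i1)) 0 (A i1 i4 / 2) 0).
  exists 0, 0.
  rewrite der_mx_mul /a0 /y locder_mx_mul // !mxE /= x0 x3.
  by congr row5; field; rewrite ?x1 ?two_neq0.
exists (row5 (A i2 i2 / 3) 0 0 ((A i1 i1 + A i1 i4) / 2 - A i2 i2 / 3) 0), 0, 0.
rewrite der_mx_mul /y locder_mx_mul // !mxE /= x0 x3 x1.
by congr row5; field; rewrite ?two_neq0 ?three_neq0.
Qed.

End LocalDerivationsOverFields.

Theorem theorem6p2 :
  forall N M : 'rV[CC]_5 -> 'rV[CC]_5,
    is_local_derivation N -> is_local_derivation M ->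
    is_local_derivation (bracket N M).
Proof.
move=> N M hN hM.
have natr_neq0 n : n.+1%:R != 0 :> CC by rewrite (@pnatr_eq0 (complex Rdefinitions.R)).
have hC := locder_mx_commutator (local_derivation_locder_mx hM)
                                (local_derivation_locder_mx hN).
apply: eq_local_derivation
  (locder_mx_local_derivation (natr_neq0 1) (natr_neq0 2) hC) => x.
by rewrite /bracket !(mul_rV_lin1_map hN.1) !(mul_rV_lin1_map hM.1) mulmxBr !mulmxA.
Qed.
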